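(* Let $F(u,v)=\sum_{p,q\geq1}F_{p,q}(t)u^pv^q=\sum_{n\geq1}f_n(u,v)t^n$, where $F_{p,q}(t)=\sum_{n\geq1}|\{e\in\mathbf{I}_n(\mathcal{AW}): e\text{ has parameters }(p,q)\}|\,t^n$. Then $$F(u,v)=tuv+\frac{tuv}{v-u}\bigl(F(v,1)-F(u,1)\bigr)+\frac{tuv}{1-u}\bigl(F(u,1)-F(u,u)\bigr).$$ Equivalently, $f_1(u,v)=uv$ and for $n\geq2$, $$f_n(u,v)=\frac{uv}{v-u}\bigl(f_{n-1}(v,1)-f_{n-1}(u,1)\bigr)+\frac{uv}{1-u}\bigl(f_{n-1}(u,1)-f_{n-1}(u,u)\bigr).$$
   Context: $\mathbf{I}_n$ is the set of inversion sequences $e=(e_1,\ldots,e_n)$ with $0\leq e_i<i$. $\mathbf{I}_n(\mathcal{AW})$ is the set of $e\in\mathbf{I}_n$ such that $e_i\leq\max\{e_{i-2},e_{i-1}\}+1$ for every $2<i\leq n$. The parameters of $e\in\mathbf{I}_n(\mathcal{AW})$ are $(p,q)$ with $p=e_n+1$ and $q=\max\{e_{n-1},e_n\}+1-e_n$, using the convention $e_0=0$. Each $f_n(u,v)$ is a polynomial in $u,v$. *)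

From HB Require Import structures.
From mathcomp Require Import all_boot all_order all_algebra.
Set Implicit Arguments. Unset Strict Implicit. Unset Printing Implicit Defensive.
Import Order.TTheory GRing.Theory Num.Theory.

(* An element of I_n is encoded as e : {ffun 'I_n -> 'I_n} with the
   (0-indexed) entry e j standing for e_{j+1}; the constraint 0 <= e_i < i
   becomes e j <= j. *)

(* 1-indexed access with the convention e_0 = 0 *)
Definition ent (n : nat) (e : {ffun 'I_n -> 'I_n}) (k : nat) : nat :=
  if k is k'.+1 then nth 0 [seq val (e i) | i <- enum 'I_n] k' else 0.

Definition is_inv_seq (n : nat) (e : {ffun 'I_n -> 'I_n}) : bool :=
  [forall j : 'I_n, val (e j) <= val j].

Definition is_AW (n : nat) (e : {ffun 'I_n -> 'I_n}) : bool :=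
  is_inv_seq e &&
  [forall i : 'I_n.+1, (2 < i) ==>
     (ent e i <= maxn (ent e i.-2) (ent e i.-1) + 1)].

Definition par_p (n : nat) (e : {ffun 'I_n -> 'I_n}) : nat := ent e n + 1.
Definition par_q (n : nat) (e : {ffun 'I_n -> 'I_n}) : nat :=
  maxn (ent e n.-1) (ent e n) + 1 - ent e n.

Definition fAW (R : fieldType) (n : nat) (u v : R) : R :=
  (\sum_(e : {ffun 'I_n -> 'I_n} | is_AW e) u ^+ par_p e * v ^+ par_q e)%R.

(* An AW sequence of length n >= 2 is an AW sequence s of length n - 1 followed
   by a last entry x with x <= max(a, b) + 1, where (a, b) = (e_{n-2}, e_{n-1});
   the inversion-sequence bound x <= n - 1 is then automatic.  The weight of the
   extension is u^(x+1) v^(max(b,x)+1-x).  Summing it over x <= b gives the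
   mixed geometric sum uv (v^(b+1) - u^(b+1)) / (v - u), and over
   b < x <= max(a,b) + 1 the geometric sum uv (u^(b+1) - u^(max(a,b)+2)) / (1 - u);
   v^(b+1), u^(b+1) and u^(max(a,b)+2) are the weights of s at (v,1), (u,1) and
   (u,u). *)

From mathcomp Require Import all_boot all_order all_algebra.
From mathcomp Require Import zify ring.
Set Implicit Arguments. Unset Strict Implicit. Unset Printing Implicit Defensive.
Import GRing.Theory.

Definition entry (t : seq nat) (k : nat) : nat :=
  if k is k'.+1 then nth 0 t k' else 0.

Definition inv_seq (t : seq nat) : bool :=
  all (fun j => nth 0 t j <= j) (iota 0 (size t)).

Definition AW_cond (t : seq nat) : bool :=
  all (fun i => (2 < i) ==> (entry t i <= maxn (entry t i.-2) (entry t i.-1) + 1))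
      (iota 0 (size t).+1).

Definition AW_seq (t : seq nat) : bool := inv_seq t && AW_cond t.

Lemma entry_rcons s x k : k <= size s -> entry (rcons s x) k = entry s k.
Proof. by case: k => //= k lt_k; rewrite nth_rcons lt_k. Qed.

Lemma entry_rcons_last s x : entry (rcons s x) (size s).+1 = x.
Proof. by rewrite /= nth_rcons ltnn eqxx. Qed.

Lemma entry_le s k : inv_seq s -> k <= size s -> entry s k <= k.-1.
Proof. by move=> /allP s_inv; case: k => //= k lt_k; apply: s_inv; rewrite mem_iota. Qed.

Lemma inv_seq_rcons s x : inv_seq (rcons s x) = inv_seq s && (x <= size s).
Proof.
rewrite /inv_seq size_rcons -addn1 iotaD all_cat /= nth_rcons ltnn eqxx andbT.
congr andb; apply: eq_in_all => j; rewrite mem_iota => /andP[_ lt_j].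
by rewrite nth_rcons lt_j.
Qed.

Lemma AW_cond_rcons s x :
  AW_cond (rcons s x) =
  AW_cond s && ((1 < size s) ==> (x <= maxn (entry s (size s).-1) (entry s (size s)) + 1)).
Proof.
rewrite /AW_cond size_rcons -(addn1 (size s).+1) iotaD all_cat all_seq1 add0n.
rewrite entry_rcons_last /= !entry_rcons ?leq_pred //; congr andb.
by apply: eq_in_all => i; rewrite mem_iota => /andP[_ lt_i]; rewrite !entry_rcons //; lia.
Qed.

Definition next_bound (s : seq nat) : nat :=
  if s is [::] then 1 else (maxn (entry s (size s).-1) (entry s (size s))).+2.

Lemma AW_seq_rcons s x : AW_seq (rcons s x) = AW_seq s && (x < next_bound s).
Proof.
rewrite /AW_seq inv_seq_rcons AW_cond_rcons andbACA.
have [s_inv|] //= := boolP (inv_seq s); have [_|] //= := boolP (AW_cond s).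
have le_last := entry_le s_inv (leqnn _).
have le_penult := entry_le s_inv (leq_pred (size s)).
by case: s s_inv le_last le_penult => [|y [|z s]] _ /= *; apply/idP/idP; lia.
Qed.

Fixpoint AW_seqs (n : nat) : seq (seq nat) :=
  if n is n'.+1 then [seq rcons s x | s <- AW_seqs n', x <- iota 0 (next_bound s)]
  else [:: [::]].

Lemma mem_AW_seqs n t : (t \in AW_seqs n) = AW_seq t && (size t == n).
Proof.
elim: n t => [|n IHn] t; first by case: t => [|y s]; rewrite inE ?andbF.
apply/allpairsPdep/idP => [[s [x [s_in x_in ->]]]|].
  move: s_in; rewrite IHn => /andP[s_AW /eqP <-].
  by rewrite AW_seq_rcons size_rcons s_AW -(mem_iota 0) x_in eqxx.
case/lastP: t => [|s x]; first by rewrite andbF.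
rewrite AW_seq_rcons size_rcons eqSS => /andP[/andP[s_AW x_lt] size_s].
by exists s, x; rewrite IHn s_AW size_s mem_iota.
Qed.

Lemma uniq_AW_seqs n : uniq (AW_seqs n).
Proof.
elim: n => [|n IHn] //=; apply: allpairs_uniq_dep => // [s _|]; first exact: iota_uniq.
by move=> [s1 x1] [s2 x2] _ _ /= /rcons_inj [-> ->].
Qed.

Definition entries n (e : {ffun 'I_n -> 'I_n}) : seq nat := [seq val (e i) | i <- enum 'I_n].

Lemma size_entries n (e : {ffun 'I_n -> 'I_n}) : size (entries e) = n.
Proof. by rewrite size_map size_enum_ord. Qed.

Lemma nth_entries n (e : {ffun 'I_n -> 'I_n}) (i : 'I_n) : nth 0 (entries e) i = val (e i).
Proof. by rewrite (nth_map i) ?size_enum_ord // nth_ord_enum. Qed.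

Lemma entries_inj n : injective (@entries n).
Proof. by move=> e1 e2 eq_e; apply/ffunP => i; apply: val_inj; rewrite /= -!nth_entries eq_e. Qed.

Lemma inv_seq_entries_onto n t : inv_seq t -> size t = n ->
  exists e : {ffun 'I_n -> 'I_n}, entries e = t.
Proof.
move=> /allP t_inv size_t.
have lt_t (i : 'I_n) : nth 0 t i < n.
  by apply: leq_ltn_trans (ltn_ord i); apply: t_inv; rewrite mem_iota size_t /=.
exists [ffun i => Ordinal (lt_t i)]; apply: (@eq_from_nth _ 0) => [|i].
  by rewrite size_entries.
by rewrite size_entries => lt_i; rewrite (nth_entries _ (Ordinal lt_i)) ffunE.
Qed.

Lemma is_AW_entries n (e : {ffun 'I_n -> 'I_n}) : is_AW e = AW_seq (entries e).
Proof.
rewrite /is_AW /is_inv_seq /AW_seq /inv_seq /AW_cond size_entries; congr andb.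
  apply/forallP/allP => [e_inv j|t_inv j].
    by rewrite mem_iota => lt_j; rewrite (nth_entries e (Ordinal lt_j)); apply: e_inv.
  by rewrite -nth_entries; apply: t_inv; rewrite mem_iota /=.
apply/forallP/allP => [e_AW i|t_AW i].
  by rewrite mem_iota => lt_i; apply: (e_AW (Ordinal lt_i)).
by apply: t_AW; rewrite mem_iota /=.
Qed.

Local Open Scope ring_scope.

Definition AW_weight (R : ringType) (u v : R) (t : seq nat) : R :=
  let n := size t in
  u ^+ (entry t n + 1) * v ^+ (maxn (entry t n.-1) (entry t n) + 1 - entry t n).

Lemma fAW_seqE (R : fieldType) n (u v : R) :
  fAW n u v = \sum_(t <- AW_seqs n) AW_weight u v t.
Proof.
have -> : fAW n u v = \sum_(e in [pred e | is_AW e]) AW_weight u v (@entries n e).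
  by apply: eq_bigr => e _; rewrite /AW_weight size_entries.
rewrite -big_image; apply/perm_big/uniq_perm; rewrite ?uniq_AW_seqs //.
  by rewrite map_inj_uniq ?enum_uniq //; apply: entries_inj.
move=> t; rewrite mem_AW_seqs; apply/imageP/andP => [[e e_AW ->]|[t_AW /eqP size_t]].
  by rewrite -is_AW_entries size_entries.
have [e e_t] := inv_seq_entries_onto (proj1 (andP t_AW)) size_t.
by exists e; rewrite // inE is_AW_entries e_t.
Qed.

Lemma sum_mixed_geometric (R : comRingType) (u v : R) k :
  (v - u) * \sum_(0 <= x < k) u ^+ x.+1 * v ^+ (k - x) = u * v * (v ^+ k - u ^+ k).
Proof.
rewrite subrXX [RHS]mulrCA; congr (_ * _); rewrite big_mkord mulr_sumr.
apply: eq_bigr => i _; have lt_i := ltn_ord i.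
by rewrite (_ : k - i = (k.-1 - i).+1)%N ?exprS; [ring | lia].
Qed.

Lemma sum_geometric_tail (R : comRingType) (u : R) j k : (j <= k)%N ->
  (1 - u) * \sum_(j <= x < k) u ^+ x.+1 = u * (u ^+ j - u ^+ k).
Proof.
move=> le_jk; rewrite mulr_sumr (@telescope_sumr_eq _ j k (fun x => - u ^+ x.+1)) //.
  by rewrite !exprS; ring.
by move=> x _; rewrite !exprS; ring.
Qed.

Lemma sum_last_entry (R : fieldType) (u v : R) b M : (b <= M)%N -> v != u -> u != 1 ->
  \sum_(0 <= x < M.+2) u ^+ x.+1 * v ^+ (maxn b x + 1 - x) =
  u * v / (v - u) * (v ^+ b.+1 - u ^+ b.+1) + u * v / (1 - u) * (u ^+ b.+1 - u ^+ M.+2).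
Proof.
move=> le_bM v_neq_u u_neq1.
have vu_neq0 : v - u != 0 by rewrite subr_eq0.
have u1_neq0 : 1 - u != 0 by rewrite subr_eq0 eq_sym.
rewrite (big_cat_nat _ (n := b.+1)) //; last by rewrite ltnW.
congr (_ + _).
  rewrite (eq_big_nat _ _ (F2 := fun x => u ^+ x.+1 * v ^+ (b.+1 - x))); last first.
    by move=> x /andP[_ lt_x]; rewrite (_ : maxn b x + 1 - x = b.+1 - x)%N //; lia.
  by apply: (mulfI vu_neq0); rewrite sum_mixed_geometric mulrA [(v - u) * _]mulrC (divfK vu_neq0).
rewrite (eq_big_nat _ _ (F2 := fun x => u ^+ x.+1 * v)); last first.
  by move=> x /andP[lt_x _]; rewrite (_ : maxn b x + 1 - x = 1)%N; [rewrite expr1 | lia].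
apply: (mulfI u1_neq0); rewrite -mulr_suml mulrA sum_geometric_tail; last exact: ltnW.
by rewrite mulrA [(1 - u) * _]mulrC (divfK u1_neq0) mulrAC.
Qed.

Lemma AW_weight_rcons (R : ringType) (u v : R) s x :
  AW_weight u v (rcons s x) = u ^+ x.+1 * v ^+ (maxn (entry s (size s)) x + 1 - x).
Proof.
by rewrite /AW_weight size_rcons entry_rcons_last /= entry_rcons // addn1.
Qed.

Lemma sum_AW_weight_rcons (R : fieldType) (u v : R) s : s != [::] -> v != u -> u != 1 ->
  \sum_(x <- iota 0 (next_bound s)) AW_weight u v (rcons s x) =
    u * v / (v - u) * (AW_weight v 1 s - AW_weight u 1 s)
  + u * v / (1 - u) * (AW_weight u 1 s - AW_weight u u s).
Proof.
case: s => [//|y s'] _ v_neq_u u_neq1; set s := y :: s'.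
set a := entry s (size s).-1; set b := entry s (size s).
have -> : next_bound s = (maxn a b).+2 by [].
under eq_bigr do rewrite AW_weight_rcons.
rewrite -(subn0 (maxn a b).+2) -/(index_iota 0 _) sum_last_entry ?leq_maxr //.
rewrite /AW_weight -/a -/b !expr1n !mulr1 addn1 -exprD.
by have -> : (b.+1 + (maxn a b + 1 - b) = (maxn a b).+2)%N by lia.
Qed.

Theorem proposition5p2 (R : fieldType) :
  (forall u v : R, fAW 1 u v = u * v) /\
  (forall (n : nat) (u v : R), (2 <= n)%N -> v != u -> u != 1 ->
     fAW n u v =
       u * v / (v - u) * (fAW n.-1 v 1 - fAW n.-1 u 1)
     + u * v / (1 - u) * (fAW n.-1 u 1 - fAW n.-1 u u)).
Proof.
split=> [u v|[|[|n]] // u v _ v_neq_u u_neq1].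
  by rewrite fAW_seqE big_seq1 /AW_weight /= !expr1.
rewrite !fAW_seqE [AW_seqs n.+2]/= big_allpairs_dep -!sumrB !mulr_sumr -big_split.
apply: eq_big_seq => s; rewrite -/(AW_seqs n.+1) mem_AW_seqs => /andP[_ /eqP size_s].
by apply: sum_AW_weight_rcons; rewrite // -size_eq0 size_s.
Qed.
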